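(* Let $Z_i=(X_i,Y_i)$, $i=1,\dots,n+1$, be i.i.d. from a distribution on $\mathbb R^p\times\mathbb R$, let $V(\cdot)$ be a real-valued score function with $V_i=V(Z_i)$, and fix $\alpha\in(0,1)$. Consider the localizer $H(x_1,x_2)=\exp(-\|x_1-x_2\|/h)$ with $h>0$ such that $\mathbb P\big(\sum_{i=1}^{n+1}H(X_{n+1},X_i)<\frac{1}{1-\alpha}\big)\ge\varepsilon$ for some $\varepsilon\in(\alpha,1)$. Let $p^H_{n+1,j}=H(X_{n+1},X_j)/\sum_{k=1}^{n+1}H(X_{n+1},X_k)$ and $\hat{\mathcal F}=\sum_{j=1}^{n}p^H_{n+1,j}\delta_{V_j}+p^H_{n+1,n+1}\delta_{+\infty}$, and let $C(X_{n+1})=\{y: V(X_{n+1},y)\le Q(\alpha;\hat{\mathcal F})\}$. Then $$\mathbb P\big(Q(\alpha;\hat{\mathcal F})=\infty\big)\ge\varepsilon,\qquad \mathbb P\big(Y_{n+1}\in C(X_{n+1})\big)=\mathbb P\big(V_{n+1}\le Q(\alpha;\hat{\mathcal F})\big)\ge\varepsilon.$$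
   Context: For a distribution $\mathcal F$ on $\mathbb R\cup\{+\infty\}$, $Q(\alpha;\mathcal F)=\inf\{t:\mathbb P_{T\sim\mathcal F}(T\le t)\ge\alpha\}$; $\delta_v$ is the point mass at $v$; $\|\cdot\|$ is a norm on $\mathbb R^p$. *)

From HB Require Import structures.
From mathcomp Require Import all_boot all_order all_algebra.
From mathcomp Require Import all_classical all_reals all_analysis.
Set Implicit Arguments. Unset Strict Implicit. Unset Printing Implicit Defensive.
Import Order.TTheory GRing.Theory Num.Theory.
Import numFieldNormedType.Exports.
Local Open Scope classical_set_scope.
Local Open Scope ring_scope.

Definition is_norm (R : realType) (p : nat) (nrm : 'rV[R]_p -> R) : Prop :=
  [/\ forall x y, nrm (x + y) <= nrm x + nrm y,
      forall (a : R) x, nrm (a *: x) = `|a| * nrm x &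
      forall x, nrm x = 0 -> x = 0].

Definition localizer (R : realType) (p : nat) (nrm : 'rV[R]_p -> R) (h : R)
  (x1 x2 : 'rV[R]_p) : R := expR (- (nrm (x1 - x2) / h)).

(* A finitely supported distribution on R U {+oo}: atoms v j with weights w j.
   Its cdf t |-> P_{T ~ F}(T <= t), and its quantile
   Q(alpha; F) = inf { t in R U {+oo} : P(T <= t) >= alpha }. *)
Definition disc_cdf (R : realType) (m : nat) (w : 'I_m -> R) (v : 'I_m -> \bar R)
  (t : \bar R) : R := \sum_(j < m | (v j <= t)%E) w j.

Definition disc_quantile (R : realType) (m : nat) (alpha : R)
  (w : 'I_m -> R) (v : 'I_m -> \bar R) : \bar R :=
  ereal_inf [set t : \bar R | t != -oo%E /\ alpha <= disc_cdf w v t].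

(* Localized weights p^H_{n+1,j} = H(X_{n+1},X_j) / sum_k H(X_{n+1},X_k);
   indices 'I_n.+1, with ord_max playing the role of n+1. *)
Definition pH (R : realType) (p n : nat) (Hl : 'rV[R]_p -> 'rV[R]_p -> R)
  (x : 'I_n.+1 -> 'rV[R]_p) (j : 'I_n.+1) : R :=
  Hl (x ord_max) (x j) / \sum_(k < n.+1) Hl (x ord_max) (x k).

Definition Fhat_atoms (R : realType) (n : nat) (v : 'I_n.+1 -> R) (j : 'I_n.+1)
  : \bar R := if (j < n)%N then (v j)%:E else +oo%E.

Definition Qhat (R : realType) (p n : nat) (alpha : R)
  (Hl : 'rV[R]_p -> 'rV[R]_p -> R) (x : 'I_n.+1 -> 'rV[R]_p) (v : 'I_n.+1 -> R)
  : \bar R := disc_quantile alpha (pH Hl x) (Fhat_atoms v).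

(* Events {Z_i in (-oo,a] x (-oo,b]}; they generate sigma(Z_i). *)
Definition Zbox_event (R : realType) (d : measure_display) (Omega : measurableType d)
  (p n : nat) (X : 'I_n.+1 -> Omega -> 'rV[R]_p) (Y : 'I_n.+1 -> Omega -> R)
  (i : 'I_n.+1) (a : 'rV[R]_p) (b : R) : set Omega :=
  [set w | (forall j, X i w ord0 j <= a ord0 j) /\ Y i w <= b].

Definition sigmaZ (R : realType) (d : measure_display) (Omega : measurableType d)
  (p n : nat) (X : 'I_n.+1 -> Omega -> 'rV[R]_p) (Y : 'I_n.+1 -> Omega -> R)
  (i : 'I_n.+1) : set (set Omega) :=
  <<s [set E | exists a b, E = Zbox_event X Y i a b] >>.

Definition iid_Z (R : realType) (d : measure_display) (Omega : measurableType d)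
  (P : probability Omega R)
  (p n : nat) (X : 'I_n.+1 -> Omega -> 'rV[R]_p) (Y : 'I_n.+1 -> Omega -> R) : Prop :=
  [/\ (forall i j, measurable_fun setT (fun w => X i w ord0 j)),
      (forall i, measurable_fun setT (Y i)),
      (forall A : 'I_n.+1 -> set Omega, (forall i, sigmaZ X Y i (A i)) ->
          P (\bigcap_(i in [set: 'I_n.+1]) A i) = (\prod_(i < n.+1) P (A i))%E) &
      (forall i a b, P (Zbox_event X Y i a b) = P (Zbox_event X Y ord0 a b))].

(** Since H(x, x) = 1, the weight of the atom +oo of F-hat is 1/S with
    S = sum_k H(X_{n+1}, X_k), so the finite atoms carry mass (S - 1)/S, and the
    alpha-quantile is +oo exactly when (S - 1)/S < alpha, i.e. S < 1/(1 - alpha).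
    The hypothesis of the theorem is thus literally the first claim, and as every
    real is below +oo the coverage event contains {Q = +oo}.  What remains is
    measurability: the coverage event is a finite Boolean combination of
    comparisons between measurable sums, and a norm on R^p is measurable because
    it is the infimum over rational q of nrm q + sum_j |x_j - q_j| nrm e_j. *)

From HB Require Import structures.
From mathcomp Require Import all_boot all_order all_algebra.
From mathcomp Require Import all_classical all_reals all_analysis.
From mathcomp Require Import measurable_realfun lra.
Import Order.TTheory GRing.Theory Num.Theory.
Import numFieldNormedType.Exports.
Local Open Scope classical_set_scope.
Local Open Scope ring_scope.

Set Implicit Arguments. Unset Strict Implicit. Unset Printing Implicit Defensive.

Section FhatQuantile.
Variables (R : realType) (m : nat) (w : 'I_m.+1 -> R) (v : 'I_m.+1 -> R) (alpha : R).

Lemma Fhat_atoms_le_fin j (t : R) :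
  (Fhat_atoms v j <= t%:E)%E = (j < m)%N && (v j <= t).
Proof. by rewrite /Fhat_atoms; case: ifP => _ //=; rewrite lee_fin. Qed.

Lemma disc_cdf_Fhat_fin (t : R) :
  disc_cdf w (Fhat_atoms v) t%:E = \sum_(j < m.+1 | (j < m)%N && (v j <= t)) w j.
Proof. by apply: eq_bigl => j; rewrite Fhat_atoms_le_fin. Qed.

Lemma disc_quantile_Fhat_eq_oo : (forall j, 0 <= w j) ->
  disc_quantile alpha w (Fhat_atoms v) = +oo%E <-> \sum_(j < m.+1 | (j < m)%N) w j < alpha.
Proof.
move=> w_ge0; split=> [Qoo|lt_alpha].
  rewrite ltNge; apply/negP => le_alpha.
  pose t := \sum_(j < m.+1) `|v j|.
  have le_vt j : v j <= t.
    rewrite /t (bigD1 j) //=; apply: le_trans (ler_norm _) _.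
    by rewrite lerDl sumr_ge0.
  suff : (disc_quantile alpha w (Fhat_atoms v) <= t%:E)%E by rewrite Qoo.
  apply: ereal_inf_lbound; split=> //.
  by rewrite disc_cdf_Fhat_fin; under eq_bigl do rewrite le_vt andbT.
apply/eqP; rewrite eq_le leey /=; apply: le_ereal_inf_tmp => -[s| |] [] //= _.
rewrite disc_cdf_Fhat_fin => le_alpha; suff : alpha < alpha by rewrite ltxx.
apply: (le_lt_trans le_alpha); apply: le_lt_trans lt_alpha.
rewrite [leLHS]big_mkcond [leRHS]big_mkcond; apply: ler_sum => j _.
by case: (j < m)%N; case: (v j <= s).
Qed.

Lemma disc_quantile_Fhat_ge (r : R) : 0 < alpha ->
  (r%:E <= disc_quantile alpha w (Fhat_atoms v))%E <->
  (forall k : 'I_m.+1, (k < m)%N -> v k < r ->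
     \sum_(j < m.+1 | (j < m)%N && (v j <= v k)) w j < alpha).
Proof.
move=> alpha_gt0; split=> [rQ k km vkr|cdf_lt].
  rewrite ltNge; apply/negP => le_alpha.
  have : (disc_quantile alpha w (Fhat_atoms v) <= (v k)%:E)%E.
    by apply: ereal_inf_lbound; split=> //; rewrite disc_cdf_Fhat_fin.
  by move/(le_trans rQ); rewrite lee_fin leNgt vkr.
apply: le_ereal_inf_tmp => -[s| |] [] //= _; rewrite ?leey // disc_cdf_Fhat_fin => le_alpha.
rewrite lee_fin leNgt; apply/negP => sr.
pose below (j : 'I_m.+1) := (j < m)%N && (v j <= s).
have [j0 below_j0|none_below] := pickP below; last first.
  by move: le_alpha; rewrite big_pred0 // leNgt alpha_gt0.
(* the largest atom below [s] has the same cdf as [s] *)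
have [k /andP[km vks] kmax] := @arg_maxP _ _ _ j0 below v below_j0.
have := cdf_lt k km (le_lt_trans vks sr); rewrite ltNge => /negP; apply.
apply: le_trans le_alpha _; rewrite le_eqVlt; apply/orP; left; apply/eqP.
apply: eq_bigl => j; apply/idP/idP => [below_j|/andP[-> /= vjk]].
  by rewrite (andP below_j).1 /=; exact: kmax.
exact: le_trans vks.
Qed.

End FhatQuantile.

Section LocalizedQuantile.
Variables (R : realType) (p n : nat) (Hl : 'rV[R]_p -> 'rV[R]_p -> R).
Hypothesis Hl_ge0 : forall a b, 0 <= Hl a b.
Hypothesis Hl_refl : forall a, Hl a a = 1.
Variables (x : 'I_n.+1 -> 'rV[R]_p) (v : 'I_n.+1 -> R) (alpha : R).

Let S := \sum_(k < n.+1) Hl (x ord_max) (x k).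

Lemma sum_localizer_split :
  S = \sum_(j < n.+1 | (j < n)%N) Hl (x ord_max) (x j) + 1.
Proof.
rewrite /S big_ord_recr /= Hl_refl [in RHS]big_mkcond [in RHS]big_ord_recr /=.
by rewrite ltnn addr0; congr (_ + _); apply: eq_bigr => i _; rewrite ltn_ord.
Qed.

Lemma sum_localizer_gt0 : 0 < S.
Proof. by rewrite sum_localizer_split ltr_pwDr // sumr_ge0. Qed.

Lemma pH_ge0 j : 0 <= pH Hl x j.
Proof. by rewrite /pH divr_ge0 // ltW // sum_localizer_gt0. Qed.

Lemma Qhat_eq_oo : 0 < alpha < 1 ->
  Qhat alpha Hl x v = +oo%E <-> S < 1 / (1 - alpha).
Proof.
case/andP=> alpha_gt0 alpha_lt1.
rewrite /Qhat disc_quantile_Fhat_eq_oo; last exact: pH_ge0.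
rewrite /pH -mulr_suml ltr_pdivrMr ?sum_localizer_gt0 // ltr_pdivlMr ?subr_gt0 //.
rewrite -/S sum_localizer_split.
by split=> ?; nra.
Qed.

Lemma Qhat_ge (r : R) : 0 < alpha ->
  (r%:E <= Qhat alpha Hl x v)%E <->
  (forall k : 'I_n.+1, (k < n)%N -> v k < r ->
     \sum_(j < n.+1 | (j < n)%N && (v j <= v k)) Hl (x ord_max) (x j) < alpha * S).
Proof.
move=> alpha_gt0; rewrite /Qhat disc_quantile_Fhat_ge //.
have cdfE k : (\sum_(j < n.+1 | (j < n)%N && (v j <= v k)) pH Hl x j < alpha) =
    (\sum_(j < n.+1 | (j < n)%N && (v j <= v k)) Hl (x ord_max) (x j) < alpha * S).
  by rewrite /pH -mulr_suml ltr_pdivrMr ?sum_localizer_gt0.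
by split=> cdf_lt k km vkr; [rewrite -cdfE | rewrite cdfE]; exact: cdf_lt.
Qed.

End LocalizedQuantile.

Section Norm.
Variables (R : realType) (p : nat) (nrm : 'rV[R]_p -> R).
Hypothesis nrm_norm : is_norm nrm.

Lemma normv_triangle x y : nrm (x + y) <= nrm x + nrm y.
Proof. by case: nrm_norm. Qed.

Lemma normvZ (a : R) x : nrm (a *: x) = `|a| * nrm x.
Proof. by case: nrm_norm. Qed.

Lemma normv0 : nrm 0 = 0.
Proof. by rewrite -(scale0r (0 : 'rV[R]_p)) normvZ normr0 mul0r. Qed.

Lemma normvN x : nrm (- x) = nrm x.
Proof. by rewrite -scaleN1r normvZ normrN1 mul1r. Qed.

Lemma normv_ge0 x : 0 <= nrm x.
Proof.
have := normv_triangle x (- x); rewrite subrr normv0 normvN.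
by rewrite -mulr2n -mulr_natr pmulr_lge0.
Qed.

Lemma normv_sum (I : Type) (r : seq I) (F : I -> 'rV[R]_p) :
  nrm (\sum_(i <- r) F i) <= \sum_(i <- r) nrm (F i).
Proof.
elim/big_rec2: _ => [|i b a _ ih]; first by rewrite normv0.
by apply: le_trans (normv_triangle _ _) _; rewrite lerD2l.
Qed.

Lemma normv_le_coord x : nrm x <= \sum_(j < p) `|x ord0 j| * nrm 'e_j.
Proof.
rewrite {1}(row_sum_delta x); apply: le_trans (normv_sum _ _) _.
by apply: ler_sum => j _; rewrite normvZ.
Qed.

(* Each [coord_bound q] dominates [nrm], and over rational [q] their infimum is
   [nrm]: this exhibits [nrm] as a countable infimum of measurable functions. *)
Definition coord_bound (q x : 'rV[R]_p) : R :=
  nrm q + \sum_(j < p) `|x ord0 j - q ord0 j| * nrm 'e_j.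

Lemma normv_le_coord_bound q x : nrm x <= coord_bound q x.
Proof.
apply: le_trans (_ : nrm q + nrm (x - q) <= _).
  by apply: le_trans (normv_triangle _ _); rewrite addrC subrK.
by rewrite lerD2l; have := normv_le_coord (x - q); under eq_bigr do rewrite !mxE.
Qed.

Lemma coord_bound_lt_rat x c : nrm x < c ->
  exists q : 'rV[rat]_p, coord_bound (map_mx ratr q) x < c.
Proof.
move=> lt_c; pose K := \sum_(j < p) nrm ('e_j : 'rV[R]_p).
have K_ge0 : 0 <= K by rewrite sumr_ge0 // => j _; exact: normv_ge0.
have [r /andP[r_gt0 r_small]] : exists r : rat, 0 < (ratr r : R) < (c - nrm x) / (2 * K + 1).
  have [|r] := @rat_in_itvoo R 0 ((c - nrm x) / (2 * K + 1)).
    by rewrite divr_gt0 ?subr_gt0 //; lra.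
  by rewrite in_itv /=; exists r.
have /choice[q qx] j : exists q : rat, `|x ord0 j - ratr q| < ratr r.
  have [|q] := @rat_in_itvoo R (x ord0 j - ratr r) (x ord0 j + ratr r); first lra.
  by rewrite in_itv /= => /andP[? ?]; exists q; rewrite ltr_norml; apply/andP; split; lra.
exists (\row_j q j).
have dist_le : \sum_(j < p) `|x ord0 j - map_mx ratr (\row_j q j) ord0 j| * nrm 'e_j
    <= ratr r * K.
  rewrite /K mulr_sumr; apply: ler_sum => j _; rewrite !mxE.
  by rewrite ler_wpM2r ?normv_ge0 // ltW.
have nrm_q : nrm (map_mx ratr (\row_j q j)) <= nrm x + ratr r * K.
  apply: le_trans (normv_le_coord_bound x _) _; rewrite lerD2l.
  by apply: le_trans dist_le; apply: ler_sum => j _; rewrite !mxE -normrN opprB.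
have : ratr r * (2 * K + 1) < c - nrm x by rewrite -ltr_pdivlMr //; lra.
rewrite /coord_bound; nra.
Qed.

End Norm.

Section Measurability.
Variables (d : measure_display) (Omega : measurableType d) (R : realType).
Implicit Types f g : Omega -> R.

Lemma measurable_ltr f g : measurable_fun setT f -> measurable_fun setT g ->
  measurable [set w | f w < g w].
Proof.
move=> mf mg; have := measurable_fun_ltr mf mg measurableT (_ : measurable [set true]).
by rewrite setTI; apply.
Qed.

Lemma measurable_ler f g : measurable_fun setT f -> measurable_fun setT g ->
  measurable [set w | f w <= g w].
Proof.
move=> mf mg; have := measurable_fun_ler mf mg measurableT (_ : measurable [set true]).
by rewrite setTI; apply.
Qed.

Variables (p : nat) (nrm : 'rV[R]_p -> R).
Hypothesis nrm_norm : is_norm nrm.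

Lemma measurable_normv (f : Omega -> 'rV[R]_p) :
  (forall j, measurable_fun setT (fun w => f w ord0 j)) ->
  measurable_fun setT (fun w => nrm (f w)).
Proof.
move=> mf; apply: (measurability _ (RGenInftyO.measurableE R)) => //.
move=> _ [_ [c ->] <-].
have m_bound q : measurable_fun setT (fun w => coord_bound nrm q (f w)).
  apply: measurable_funD => //; apply: measurable_sum => j.
  apply: measurable_funM => //; apply: measurableT_comp => //.
  exact: measurable_funB.
suff -> : setT `&` (fun w => nrm (f w)) @^-1` `]-oo, c[ =
    \bigcup_(q : 'rV[rat]_p)
      (setT `&` (fun w => coord_bound nrm (map_mx ratr q) (f w)) @^-1` `]-oo, c[).
  by apply: countable_bigcupT_measurable => // q; exact: m_bound.
apply/seteqP; split=> w /=; rewrite !in_itv /=.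
  by move=> [_ /(coord_bound_lt_rat nrm_norm)[q ?]]; exists q.
move=> [q _ [_ /=]]; rewrite in_itv /= => lt_c; split=> //.
exact: le_lt_trans (normv_le_coord_bound nrm_norm _ _) lt_c.
Qed.

Lemma measurable_localizer (h : R) (x1 x2 : Omega -> 'rV[R]_p) :
  (forall j, measurable_fun setT (fun w => x1 w ord0 j)) ->
  (forall j, measurable_fun setT (fun w => x2 w ord0 j)) ->
  measurable_fun setT (fun w => localizer nrm h (x1 w) (x2 w)).
Proof.
move=> mx1 mx2; apply: measurableT_comp => //; apply: measurableT_comp => //.
apply: measurable_funM => //; apply: measurable_normv => j.
by under eq_fun do rewrite !mxE; exact: measurable_funB.
Qed.

End Measurability.

Section CoverageEvent.
Variables (d : measure_display) (Omega : measurableType d) (R : realType).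
Variables (p n : nat) (Hl : 'rV[R]_p -> 'rV[R]_p -> R).
Hypothesis Hl_ge0 : forall a b, 0 <= Hl a b.
Hypothesis Hl_refl : forall a, Hl a a = 1.
Variables (x : Omega -> 'I_n.+1 -> 'rV[R]_p) (v : Omega -> 'I_n.+1 -> R).
Hypothesis mHl : forall j, measurable_fun setT (fun w => Hl (x w ord_max) (x w j)).
Hypothesis mv : forall j, measurable_fun setT (fun w => v w j).

Lemma measurable_le_Qhat (alpha : R) (r : Omega -> R) : 0 < alpha ->
  measurable_fun setT r ->
  measurable [set w | ((r w)%:E <= Qhat alpha Hl (x w) (v w))%E].
Proof.
move=> alpha_gt0 mr.
pose S w := \sum_(k < n.+1) Hl (x w ord_max) (x w k).
pose cdf k w := \sum_(j < n.+1 | (j < n)%N && (v w j <= v w k)) Hl (x w ord_max) (x w j).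
have mcdf k : measurable_fun setT (cdf k).
  rewrite /cdf; under eq_fun do rewrite big_mkcond /=.
  apply: measurable_sum => j; apply: measurable_fun_ifT => //.
  exact/measurable_and/measurable_fun_ler.
suff -> : [set w | ((r w)%:E <= Qhat alpha Hl (x w) (v w))%E] =
    \bigcap_(k in [set k : 'I_n.+1 | (k < n)%N])
      ([set w | r w <= v w k] `|` [set w | cdf k w < alpha * S w]).
  apply: fin_bigcap_measurable => [|k _]; first exact: finite_finset.
  apply: measurableU; first exact: measurable_ler.
  by apply: measurable_ltr => //; apply: measurable_funM => //; exact: measurable_sum.
apply/seteqP; split=> w /=.
  move=> /(Qhat_ge Hl_ge0 Hl_refl _ _ _ alpha_gt0) cdf_lt k /= kn.
  by case: (leP (r w) (v w k)) => [|vr]; [left | right; exact: cdf_lt].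
move=> cover; apply/(Qhat_ge Hl_ge0 Hl_refl _ _ _ alpha_gt0) => k kn vr.
by case: (cover k kn) => //=; rewrite leNgt vr.
Qed.

End CoverageEvent.

Unset Implicit Arguments.

Theorem proposition1 (R : realType) (d : measure_display) (Omega : measurableType d)
  (P : probability Omega R) (p n : nat)
  (X : 'I_n.+1 -> Omega -> 'rV[R]_p) (Y : 'I_n.+1 -> Omega -> R)
  (V : 'rV[R]_p -> R -> R) (nrm : 'rV[R]_p -> R) (alpha h eps : R) :
  iid_Z P X Y ->
  (forall i, measurable_fun setT (fun w => V (X i w) (Y i w))) ->
  is_norm nrm ->
  0 < alpha < 1 ->
  0 < h ->
  alpha < eps < 1 ->
  (P [set w | (\sum_(i < n.+1) localizer nrm h (X ord_max w) (X i w) < 1 / (1 - alpha))%R]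
     >= eps%:E)%E ->
  let Q := fun w => Qhat alpha (localizer nrm h) (fun i => X i w)
                         (fun i => V (X i w) (Y i w)) in
  let C := fun w => [set y : R | ((V (X ord_max w) y)%:E <= Q w)%E] in
  (P [set w | Q w = +oo%E] >= eps%:E)%E /\
  P [set w | C w (Y ord_max w)] = P [set w | ((V (X ord_max w) (Y ord_max w))%:E <= Q w)%E] /\
  (P [set w | ((V (X ord_max w) (Y ord_max w))%:E <= Q w)%E] >= eps%:E)%E.
Proof.
move=> [mX _ _ _] mV nrm_norm alpha01 _ _ mass_lt Q C.
have H_ge0 a b : 0 <= localizer nrm h a b by rewrite /localizer expR_ge0.
have H_refl a : localizer nrm h a a = 1.
  by rewrite /localizer subrr normv0 // mul0r oppr0 expR0.
have mH i : measurable_fun setT (fun w => localizer nrm h (X ord_max w) (X i w)).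
  exact: measurable_localizer.
have Qoo_event : [set w | Q w = +oo%E] =
    [set w | \sum_(i < n.+1) localizer nrm h (X ord_max w) (X i w) < 1 / (1 - alpha)].
  apply/seteqP; split=> w /=;
    by have [] := Qhat_eq_oo H_ge0 H_refl (X^~ w) (fun i => V (X i w) (Y i w)) alpha01.
split; first by rewrite Qoo_event.
split=> //; apply: le_trans mass_lt _; rewrite -Qoo_event.
apply: le_measure; rewrite ?inE.
- by rewrite Qoo_event; apply: measurable_ltr => //; exact: measurable_sum.
- by case/andP: alpha01 => alpha_gt0 _; exact: measurable_le_Qhat.
- by move=> w /= ->; rewrite leey.
Qed.
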